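(* For every tournament $T$ on $N$ nodes and every positive integer $k \le N$, the auxiliary bipartite digraph $G(T)$ contains no directed cycle of length $2$ (digon) and no directed cycle of length $4$.
   Context: Let $T=(V,E)$ be a tournament on $N$ nodes and let $k \le N$ be a positive integer. The auxiliary bipartite digraph $G(T)$ has vertex set $R \cup C$, where $R$ contains one vertex for each node of $T$ and $C$ contains one vertex for each $k$-element subset of $V$. Its arcs are: for each $X = \{v_1,\dots,v_k\} \in C$, the arcs $(v_i, X)$ for $1 \le i \le k$; and for each $u \in R$ and $X \in C$, the arc $(X, u)$ if and only if $(u, v_i) \in E$ for all $v_i \in X$. *)

From mathcomp Require Import all_boot.
Set Implicit Arguments. Unset Strict Implicit. Unset Printing Implicit Defensive.

Definition tournament (V : finType) (E : rel V) : Prop :=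
  (forall u, ~~ E u u) /\
  (forall u v, u != v -> (E u v && ~~ E v u) || (E v u && ~~ E u v)).

Definition ksubset (V : finType) (k : nat) := {X : {set V} | #|X| == k}.

(* Vertex set R \cup C of G(T): inl v is the vertex of R for node v,
   inr X is the vertex of C for the k-subset X. *)
Definition auxV (V : finType) (k : nat) := (V + ksubset V k)%type.

Definition aux_arc (V : finType) (E : rel V) (k : nat) (a b : auxV V k) : bool :=
  match a, b with
  | inl v, inr X => v \in val X
  | inr X, inl u => [forall v in val X, E u v]
  | _, _ => false
  end.

Definition has_digon (W : finType) (arc : W -> W -> bool) : Prop :=
  exists a b : W, [/\ a != b, arc a b & arc b a].

Definition has_4cycle (W : finType) (arc : W -> W -> bool) : Prop :=
  exists a b c d : W,
    uniq [:: a; b; c; d] /\ [&& arc a b, arc b c, arc c d & arc d a].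

From mathcomp Require Import all_boot.
Set Implicit Arguments. Unset Strict Implicit. Unset Printing Implicit Defensive.

(* G(T) is bipartite, so a digon reads v -> X -> v and a 4-cycle reads
   v -> X -> u -> Y -> v with v, u in R.  An arc v -> X -> u forces the arc
   u -> v of T, since v is one of the nodes of X dominated by u.  The digon
   then yields a loop v -> v and the 4-cycle both arcs u -> v and v -> u,
   neither of which exists in a tournament. *)

Section TournamentFacts.

Variables (V : finType) (E : rel V).
Hypothesis tourE : tournament E.

Lemma tournament_irrefl (u : V) : ~~ E u u.
Proof. exact: tourE.1. Qed.

Lemma tournament_asym (u v : V) : E u v -> ~~ E v u.
Proof.
move=> Euv; case: (eqVneq u v) => [<- | neq_uv]; first by rewrite tournament_irrefl.
by have := tourE.2 u v neq_uv; rewrite Euv /= => /orP [] // /andP [].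
Qed.

End TournamentFacts.

Section AuxiliaryDigraph.

Variables (V : finType) (E : rel V) (k : nat).
Local Notation arc := (@aux_arc V E k).

Lemma aux_arc_through (v u : V) (X : ksubset V k) :
  arc (inl v) (inr X) -> arc (inr X) (inl u) -> E u v.
Proof. by move=> /= vX /forall_inP; apply. Qed.

Lemma aux_no_digon : (forall u, ~~ E u u) -> ~ has_digon arc.
Proof.
move=> irrE [[v|X] [[u|Y] [_ ab ba]]] //.
- by move: (irrE v); rewrite (aux_arc_through ab ba).
- by move: (irrE u); rewrite (aux_arc_through ba ab).
Qed.

Lemma aux_no_4cycle : (forall u v, E u v -> ~~ E v u) -> ~ has_4cycle arc.
Proof.
move=> asymE [[v|X] [[u|Y] [[w|Z] [[x|W] [_ /and4P [ab bc cd da]]]]]] //.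
- by move: (asymE _ _ (aux_arc_through ab bc)); rewrite (aux_arc_through cd da).
- by move: (asymE _ _ (aux_arc_through da ab)); rewrite (aux_arc_through bc cd).
Qed.

End AuxiliaryDigraph.

Theorem lemma2 (N : nat) (V : finType) (E : rel V) (k : nat) :
  #|V| = N -> tournament E -> 0 < k -> k <= N ->
  ~ has_digon (@aux_arc V E k) /\ ~ has_4cycle (@aux_arc V E k).
Proof.
move=> _ tourE _ _; split.
- exact/aux_no_digon/tournament_irrefl.
- exact/aux_no_4cycle/tournament_asym.
Qed.
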